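(* Let $(\mathcal M,X,\bot)$ be an accessible concurrent system. The following are equivalent: (1) the system is irreducible; (2) for some state $\alpha$ and some letter $a$, there exists an $a$-rooted linking execution from $\alpha$; (3) for every state $\alpha$ and every letter $a$, there exists an $a$-rooted linking execution from $\alpha$.
   Context: A trace monoid $\mathcal M=\mathcal M(\Sigma,I)$ is $\langle\Sigma\mid ab=ba\ ((a,b)\in I)\rangle$, $\Sigma$ finite, $I$ irreflexive symmetric; $D=(\Sigma\times\Sigma)\setminus I$; $\mathcal M$ is irreducible if $(\Sigma,D)$ is connected. A concurrent system $(\mathcal M,X,\bot)$: $X$ finite, $\bot\notin X$, right action of $\mathcal M$ on $X\cup\{\bot\}$ with $\bot\cdot x=\bot$. Accessible: for all $\alpha,\beta\in X$ some $x$ with $\alpha\cdot x=\beta$. Alive: for every $\alpha$ and $a\in\Sigma$ some $x$ containing $a$ with $\alpha\cdot x\ne\bot$. Irreducible: accessible, alive and $\mathcal M$ irreducible. A linking sequence from $\alpha$ is a sequence of letters $a_1,\dots,a_p$ such that, for some indices $1\le j_1<\dots<j_q\le p$: $\alpha\cdot(a_1\cdots a_p)\ne\bot$; $(a_{j_k},a_{j_{k+1}})\in D$ for $k=1,\dots,q-1$; and every letter of $\Sigma$ occurs in $(a_{j_1},\dots,a_{j_q})$. It is $a$-rooted if the indices can be chosen with $a_{j_1}=a$. A (resp. $a$-rooted) linking execution from $\alpha$ is the image in $\mathcal M$ of a (resp. $a$-rooted) linking sequence from $\alpha$. *)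

From mathcomp Require Import all_boot.
From Stdlib Require Import Relation_Operators.
Set Implicit Arguments. Unset Strict Implicit. Unset Printing Implicit Defensive.

Section Concurrent.
Variables (Sigma X : finType).

(* Independence relation I (irreflexive, symmetric, as hypotheses of the
   theorem) and dependence D = complement of I. *)
Definition dep (I : rel Sigma) : rel Sigma := fun a b => ~~ I a b.

(* Trace monoid M(Sigma, I): words modulo the congruence generated by
   ab = ba for (a,b) in I.  One elementary step swaps two adjacent
   independent letters. *)
Definition swap_step (I : rel Sigma) (s t : seq Sigma) : Prop :=
  exists u v a b, I a b /\ s = u ++ [:: a; b] ++ v /\ t = u ++ [:: b; a] ++ v.

Definition trace_eq (I : rel Sigma) : seq Sigma -> seq Sigma -> Prop :=
  clos_refl_sym_trans (seq Sigma) (swap_step I).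

Definition irreducible_monoid (I : rel Sigma) : Prop :=
  forall a b : Sigma, connect (dep I) a b.

(* A right action of M on X ∪ {⊥} with ⊥ absorbing: X ∪ {⊥} is option X
   (None = ⊥); the action is given on generators by act : X -> Sigma -> option X
   and extended to words by run; it is an action of M iff it respects the
   defining relations ab = ba for (a,b) in I (see act_compat). *)
Definition step (act : X -> Sigma -> option X) (o : option X) (a : Sigma)
  : option X := if o is Some x then act x a else None.

Definition run (act : X -> Sigma -> option X) (alpha : X) (w : seq Sigma)
  : option X := foldl (step act) (Some alpha) w.

Definition act_compat (I : rel Sigma) (act : X -> Sigma -> option X) : Prop :=
  forall (alpha : X) (a b : Sigma), I a b ->
    run act alpha [:: a; b] = run act alpha [:: b; a].

Definition accessible (act : X -> Sigma -> option X) : Prop :=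
  forall alpha beta : X, exists w : seq Sigma, run act alpha w = Some beta.

Definition alive (act : X -> Sigma -> option X) : Prop :=
  forall (alpha : X) (a : Sigma),
    exists w : seq Sigma, a \in w /\ run act alpha w <> None.

Definition irreducible_system (I : rel Sigma) (act : X -> Sigma -> option X)
  : Prop := [/\ accessible act, alive act & irreducible_monoid I].

(* Linking sequence from alpha: s with alpha·s <> ⊥ and a subsequence
   t = (a_{j_1},...,a_{j_q}) of s (chosen at increasing indices, i.e.
   subseq t s) whose consecutive letters are dependent and which contains
   every letter. *)
Definition linking_seq (I : rel Sigma) (act : X -> Sigma -> option X)
  (alpha : X) (s : seq Sigma) : Prop :=
  run act alpha s <> None /\
  exists t : seq Sigma, [/\ subseq t s, sorted (dep I) t & forall c, c \in t].

Definition rooted_linking_seq (I : rel Sigma) (act : X -> Sigma -> option X)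
  (alpha : X) (a : Sigma) (s : seq Sigma) : Prop :=
  run act alpha s <> None /\
  exists t : seq Sigma,
    [/\ subseq (a :: t) s, path (dep I) a t & forall c, c \in a :: t].

(* A (a-rooted) linking execution from alpha: a trace (represented by any
   word w of its class) which is the image of a (a-rooted) linking sequence. *)
Definition linking_execution (I : rel Sigma) (act : X -> Sigma -> option X)
  (alpha : X) (w : seq Sigma) : Prop :=
  exists s, linking_seq I act alpha s /\ trace_eq I s w.

Definition rooted_linking_execution (I : rel Sigma)
  (act : X -> Sigma -> option X) (alpha : X) (a : Sigma) (w : seq Sigma)
  : Prop :=
  exists s, rooted_linking_seq I act alpha a s /\ trace_eq I s w.

End Concurrent.

From mathcomp Require Import all_boot.
From Stdlib Require Import Relation_Operators.
Set Implicit Arguments. Unset Strict Implicit. Unset Printing Implicit Defensive.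

(* An a-rooted linking sequence is a run that is defined and contains a
   D-path from a through every letter.  If the dependence graph is connected,
   chaining D-paths between consecutive letters gives such a path from any a,
   and aliveness lets a defined run pass through its letters one after the
   other, from any state.  Conversely, one linking sequence from one state
   contains every letter (so with accessibility every state can fire every
   letter), and its D-path connects every letter to its root. *)

Lemma connect_cover_path (T : finType) (e : rel T) :
  (forall x y, connect e x y) ->
  forall (s : seq T) x, exists p, path e x p /\ {subset s <= x :: p}.
Proof.
move=> e_conn; elim=> [|y s IHs] x; first by exists [::].
have /connectP [p xp_path y_last] := e_conn x y.
have [q [yq_path s_sub]] := IHs y.
have y_in : y \in x :: p ++ q by rewrite -cat_cons mem_cat y_last mem_last.
exists (p ++ q); split; first by rewrite cat_path xp_path -y_last.
move=> z; rewrite inE => /predU1P [-> //|/s_sub].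
by rewrite inE => /predU1P [-> //|zq]; rewrite -cat_cons mem_cat zq orbT.
Qed.

Lemma path_cover_connect (T : finType) (e : rel T) x p :
  connect_sym e -> path e x p -> (forall z, z \in x :: p) ->
  forall y z, connect e y z.
Proof.
move=> e_sym xp_path p_cover y z.
apply: (@connect_trans _ _ x); last exact: path_connect xp_path _ (p_cover z).
by rewrite e_sym; exact: path_connect xp_path _ (p_cover y).
Qed.

Section Runs.
Variables (Sigma X : finType) (act : X -> Sigma -> option X).

Lemma foldl_step_None (w : seq Sigma) : foldl (step act) None w = None.
Proof. by elim: w. Qed.

Lemma run_cat alpha (u v : seq Sigma) :
  run act alpha (u ++ v) =
  if run act alpha u is Some beta then run act beta v else None.
Proof.
by rewrite /run foldl_cat; case: (foldl _ _ u) => // ; exact: foldl_step_None.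
Qed.

Lemma alive_run_supseq : alive act ->
  forall (l : seq Sigma) alpha, exists s, subseq l s /\ run act alpha s <> None.
Proof.
move=> act_alive; elim=> [|c l IHl] alpha; first by exists [::].
have [w [cw w_def]] := act_alive alpha c.
case alpha_w: (run act alpha w) w_def => [beta|] // _.
have [s [l_s s_def]] := IHl beta.
exists (w ++ s); split; last by rewrite run_cat alpha_w.
by rewrite -cat1s cat_subseq // sub1seq.
Qed.

Lemma accessible_full_run_alive alpha (s : seq Sigma) :
  accessible act -> run act alpha s <> None -> (forall c, c \in s) ->
  alive act.
Proof.
move=> act_acc s_def s_full beta c; have [u beta_u] := act_acc beta alpha.
exists (u ++ s); split; first by rewrite mem_cat s_full orbT.
by rewrite run_cat beta_u.
Qed.

End Runs.

Section Linking.
Variables (Sigma X : finType) (I : rel Sigma) (act : X -> Sigma -> option X).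
Hypothesis I_sym : symmetric I.

Lemma irreducible_rooted_linking_execution :
  irreducible_system I act ->
  forall alpha a, exists w, rooted_linking_execution I act alpha a w.
Proof.
case=> _ act_alive D_conn alpha a.
have [t [at_path t_cover]] := connect_cover_path D_conn (enum Sigma) a.
have [s [at_s s_def]] := alive_run_supseq act_alive (a :: t) alpha.
exists s, s; split; last exact: rst_refl.
split=> //; exists t; split=> // c; exact/t_cover/mem_enum.
Qed.

Lemma rooted_linking_execution_irreducible alpha a w :
  accessible act -> rooted_linking_execution I act alpha a w ->
  irreducible_system I act.
Proof.
move=> act_acc [s [[s_def [t [at_s at_path t_full]]] _]].
have D_sym : connect_sym (dep I).
  by apply: sym_connect_sym => x y; rewrite /dep I_sym.
split=> //.
- apply: accessible_full_run_alive act_acc s_def _ => c.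
  exact: (mem_subseq at_s) (t_full c).
- exact: path_cover_connect D_sym at_path t_full.
Qed.

End Linking.

Theorem proposition9 (Sigma X : finType) (I : rel Sigma)
  (I_irr : irreflexive I) (I_sym : symmetric I)
  (Sigma_ne : inhabited Sigma) (X_ne : inhabited X)
  (act : X -> Sigma -> option X) (Hact : act_compat I act)
  (Hacc : accessible act) :
  [<-> irreducible_system I act;
       exists (alpha : X) (a : Sigma) (w : seq Sigma),
         rooted_linking_execution I act alpha a w;
       forall (alpha : X) (a : Sigma), exists w : seq Sigma,
         rooted_linking_execution I act alpha a w].
Proof.
case: Sigma_ne => a0; case: X_ne => alpha0.
tfae.
- move=> irr; have [w lw] := irreducible_rooted_linking_execution irr alpha0 a0.
  by exists alpha0, a0, w.
- case=> alpha [a [w lw]].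
  apply: irreducible_rooted_linking_execution.
  exact: (rooted_linking_execution_irreducible I_sym Hacc lw).
- move=> all_lw; have [w lw] := all_lw alpha0 a0.
  exact: (rooted_linking_execution_irreducible I_sym Hacc lw).
Qed.
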